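(* Let $C\subset\mathbb{R}^d$ be a convex body and let $\Lambda\subset\mathbb{R}^d$ be a $d$-dimensional lattice. The following are equivalent: (1) $C$ is lattice reduced with respect to $\Lambda$; (2) for every exposed point $p$ of $C$ there exists a width direction $y\in\Lambda^\star$ of $C$ such that $y\cdot p>y\cdot x$ for all $x\in C\setminus\{p\}$.
   Context: A convex body is a compact convex set with non-empty interior. An exposed point of $C$ is a point $p$ such that $C\cap H=\{p\}$ for some supporting hyperplane $H$ of $C$. A lattice $\Lambda\subset\mathbb{R}^d$ is a discrete subgroup spanning $\mathbb{R}^d$; $\Lambda^\star=\{y: x\cdot y\in\mathbb{Z}\ \forall x\in\Lambda\}$. The lattice width is $\mathrm{wdt}_\Lambda(C)=\min_{y\in\Lambda^\star\setminus\{0\}}\max_{a,b\in C}y\cdot(a-b)$; a width direction is a $y\in\Lambda^\star\setminus\{0\}$ attaining this minimum. $C$ is lattice reduced if no convex body $C'\subsetneq C$ has $\mathrm{wdt}_\Lambda(C')=\mathrm{wdt}_\Lambda(C)$. *)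

From HB Require Import structures.
From mathcomp Require Import all_boot all_order all_algebra.
From mathcomp Require Import all_classical all_reals all_analysis.
Set Implicit Arguments. Unset Strict Implicit. Unset Printing Implicit Defensive.
Import Order.TTheory GRing.Theory Num.Theory.
Import numFieldNormedType.Exports.
Local Open Scope classical_set_scope.
Local Open Scope ring_scope.

Section Defs.
Variables (R : realType) (d : nat).
Notation V := 'rV[R]_d.

Definition dot (x y : V) : R := \sum_(i < d) x ord0 i * y ord0 i.

Definition convex_set (C : set V) : Prop :=
  forall x y t, C x -> C y -> 0 <= t <= 1 -> C (t *: x + (1 - t) *: y).

Definition convex_body (C : set V) : Prop :=
  [/\ convex_set C, compact C & exists x, interior C x].

Definition is_lattice (L : set V) : Prop :=
  [/\ L 0, (forall x y, L x -> L y -> L (x - y)),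
      (forall x, L x -> exists2 e : R, 0 < e &
           forall y, L y -> `|y - x| < e -> y = x) &
      (forall v : V, exists n (c : 'I_n -> R) (w : 'I_n -> V),
           (forall i, L (w i)) /\ v = \sum_(i < n) c i *: w i)].

Definition dual_lattice (L : set V) : set V :=
  [set y | forall x, L x -> exists z : int, dot x y = z%:~R].

Definition width_dir (C : set V) (y : V) : R :=
  sup [set dot y (a - b) | a in C & b in C].

Definition lattice_width (L C : set V) : R :=
  inf [set width_dir C y | y in [set y | dual_lattice L y /\ y != 0]].

Definition width_direction (L C : set V) (y : V) : Prop :=
  [/\ dual_lattice L y, y != 0 & width_dir C y = lattice_width L C].

Definition lattice_reduced (L C : set V) : Prop :=
  forall C' : set V, convex_body C' -> C' `<` C ->
    lattice_width L C' <> lattice_width L C.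

Definition supporting_hyperplane (C : set V) (u : V) (c : R) : Prop :=
  [/\ u != 0, (forall x, C x -> dot u x <= c) & exists x, C x /\ dot u x = c].

Definition exposed_point (C : set V) (p : V) : Prop :=
  exists u c, supporting_hyperplane C u c /\
    C `&` [set x | dot u x = c] = [set p].

End Defs.

(* (2) => (1): a convex body C' strictly inside C misses an exposed point p of C.  Indeed,
   separate a point q of C \ C' from C' by a hyperplane u.x = m; the point of C farthest
   from q - t u, for t large, is exposed and lies beyond that hyperplane.  A width direction
   y strictly maximized at p then gives w(C') <= width_C'(y) < width_C(y) = w(C).
   (1) => (2): if no width direction is strictly maximized at p, cut C by the halfspaces
   u.x <= u.p - t (u.p - u.x0), where u exposes p and x0 is interior.  For a width direction
   y, both y and -y attain their maximum on C away from p, hence on the cut once t is small,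
   so the width in direction y is unchanged.  Every other dual vector has width_C(y) > w(C),
   while the homothety of ratio 1 - t centered at x0 maps C into the cut, so
   width_cut(y) >= (1 - t) width_C(y) >= w(C) for small t.  Only finitely many dual vectors
   have width_C(y) <= 2 w(C), so a single t > 0 serves them all, and the cut is a proper
   convex sub-body of C with the same lattice width. *)

From Pilot Require Import Defs.
From mathcomp Require Import all_boot all_order all_algebra.
From mathcomp Require Import all_classical all_reals all_analysis.
From mathcomp Require Import lra ring zify.
Import Order.TTheory GRing.Theory Num.Theory.
Import numFieldNormedType.Exports.
Local Open Scope classical_set_scope.
Local Open Scope ring_scope.

Set Implicit Arguments.
Unset Strict Implicit.
Unset Printing Implicit Defensive.

Lemma filter_forall_finite_set (I : choiceType) (T : Type) (F : set_system T)
    (D : set I) (P : I -> set T) :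
  Filter F -> finite_set D -> (forall i, D i -> \forall x \near F, P i x) ->
  \forall x \near F, forall i, D i -> P i x.
Proof.
move=> FF /finite_fsetP[X ->] PD.
by apply: filterS (filter_bigI FF PD) => x PX i Xi; exact: PX.
Qed.

Lemma inord_shift_inj (N : nat) (a b : int) : (`|a| < N)%N -> (`|b| < N)%N ->
  inord `|a + N| = inord `|b + N| :> 'I_(N.*2).+1 -> a = b.
Proof. by move=> aN bN /(congr1 val) /=; rewrite !inordK; lia. Qed.

Section Extrema.
Variables (R : realType) (T : topologicalType).
Implicit Types (C : set T) (f : T -> R).

Lemma compact_argmax C f : C !=set0 -> compact C -> continuous f ->
  exists2 a, C a & forall x, C x -> f x <= f a.
Proof.
move=> C0 cC fc.
have [a /set_mem Ca fa] := compact_EVT_max C0 cC (continuous_subspaceT fc).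
by exists a => // x Cx; apply/fa/mem_set.
Qed.

Lemma compact_argmin C f : C !=set0 -> compact C -> continuous f ->
  exists2 b, C b & forall x, C x -> f b <= f x.
Proof.
move=> C0 cC fc.
have [b /set_mem Cb fb] := compact_EVT_min C0 cC (continuous_subspaceT fc).
by exists b => // x Cx; apply/fb/mem_set.
Qed.

End Extrema.

Section InnerProduct.
Variables (R : realType) (d : nat).
Notation V := 'rV[R]_d.
Implicit Types (x y z : V).

Lemma dotC x y : dot x y = dot y x.
Proof. by apply: eq_bigr => i _; rewrite mulrC. Qed.

Lemma dotDl x y z : dot (x + y) z = dot x z + dot y z.
Proof. by rewrite /dot -big_split; apply: eq_bigr => i _; rewrite mxE mulrDl. Qed.

Lemma dotZl (a : R) x y : dot (a *: x) y = a * dot x y.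
Proof. by rewrite /dot mulr_sumr; apply: eq_bigr => i _; rewrite mxE mulrA. Qed.

Lemma dotNl x y : dot (- x) y = - dot x y.
Proof. by rewrite -scaleN1r dotZl mulN1r. Qed.

Lemma dotDr x y z : dot x (y + z) = dot x y + dot x z.
Proof. by rewrite dotC dotDl !(dotC x). Qed.

Lemma dotZr (a : R) x y : dot x (a *: y) = a * dot x y.
Proof. by rewrite dotC dotZl dotC. Qed.

Lemma dotNr x y : dot x (- y) = - dot x y.
Proof. by rewrite dotC dotNl dotC. Qed.

Lemma dotBr x y z : dot x (y - z) = dot x y - dot x z.
Proof. by rewrite dotDr dotNr. Qed.

Lemma dot0l x : dot 0 x = 0.
Proof. by rewrite -(scale0r 0) dotZl mul0r. Qed.

Lemma dotDD x y : dot (x + y) (x + y) = dot x x + 2 * dot x y + dot y y.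
Proof. by rewrite !dotDl !dotDr (dotC y x); ring. Qed.

Lemma dot_suml (I : Type) (r : seq I) (P : pred I) (F : I -> V) y :
  dot (\sum_(i <- r | P i) F i) y = \sum_(i <- r | P i) dot (F i) y.
Proof.
elim: r => [|i r IH]; first by rewrite !big_nil dot0l.
by rewrite !big_cons; case: (P i); rewrite ?dotDl IH.
Qed.

Lemma dot_delta_mx (j : 'I_d) y : dot (delta_mx 0 j) y = y 0 j.
Proof.
rewrite /dot (bigD1 j) //= big1 ?addr0 => [|k kj]; first by rewrite mxE !eqxx mul1r.
by rewrite mxE (negbTE kj) andbF mul0r.
Qed.

Lemma dotxx_ge0 x : 0 <= dot x x.
Proof. by apply: sumr_ge0 => i _; rewrite -expr2 sqr_ge0. Qed.

Lemma dotxx_eq0 x : (dot x x == 0) = (x == 0).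
Proof.
apply/idP/eqP => [|->]; last by rewrite dot0l.
rewrite psumr_eq0 => [/allP x0|i _]; last by rewrite -expr2 sqr_ge0.
apply/rowP => i; rewrite mxE.
by apply/eqP; rewrite -sqrf_eq0 expr2 (eqP (x0 i (mem_index_enum _))).
Qed.

Lemma dotxx_gt0 x : (0 < dot x x) = (x != 0).
Proof. by rewrite lt_def dotxx_ge0 dotxx_eq0 andbT. Qed.

Lemma continuous_dot (T : topologicalType) (f g : T -> V) :
  continuous f -> continuous g -> continuous (fun t => dot (f t) (g t)).
Proof.
move=> fc gc; apply: continuous_big => [|i _ t]; first exact: add_continuous.
have coord (h : T -> V) : continuous h -> {for t, continuous (fun t => h t ord0 i)}.
  move=> hc; apply: (@continuous_comp _ _ _ h (fun M : V => M ord0 i)).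
    exact: hc.
  exact: coord_continuous.
exact: continuousM (coord f fc) (coord g gc).
Qed.

Lemma continuous_dotr y : continuous (dot y).
Proof. exact: continuous_dot (@cst_continuous _ _ y) (fun _ => cvg_id). Qed.

Lemma continuous_dist2 z : continuous (fun x => dot (x - z) (x - z)).
Proof.
have subz : continuous (fun x : V => x - z).
  by move=> x; apply: continuousB; [exact: cvg_id | exact: cst_continuous].
exact: (continuous_dot subz subz).
Qed.

End InnerProduct.
Arguments continuous_dotr {R d} y.
Arguments continuous_dist2 {R d} z.

Section Width.
Variables (R : realType) (d : nat).
Notation V := 'rV[R]_d.
Implicit Types (x y p v : V) (A B C : set V).

Lemma width_dirE C y a b : C a -> C b ->
    (forall x, C x -> dot y x <= dot y a) -> (forall x, C x -> dot y b <= dot y x) ->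
  width_dir C y = dot y a - dot y b.
Proof.
move=> Ca Cb ya yb.
have Wab : [set dot y (a - b) | a in C & b in C] (dot y a - dot y b).
  by exists a => //; exists b => //; rewrite dotBr.
have ub : ubound [set dot y (a - b) | a in C & b in C] (dot y a - dot y b).
  by move=> _ [a' Ca' [b' Cb' <-]]; rewrite dotBr lerB ?ya ?yb.
apply/eqP; rewrite eq_le ge_sup /=; [|by exists (dot y a - dot y b) | by []].
by apply: sup_upper_bound => //; split; exists (dot y a - dot y b).
Qed.

Lemma width_dir_attained C y : C !=set0 -> compact C ->
  exists a b, [/\ C a, C b, forall x, C x -> dot y x <= dot y a,
    forall x, C x -> dot y b <= dot y x & width_dir C y = dot y a - dot y b].
Proof.
move=> C0 cC.
have [a Ca ya] := compact_argmax C0 cC (continuous_dotr y).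
have [b Cb yb] := compact_argmin C0 cC (continuous_dotr y).
by exists a, b; split => //; apply: width_dirE.
Qed.

Lemma width_dir_ge C y a b : compact C -> C a -> C b -> dot y (a - b) <= width_dir C y.
Proof.
move=> cC Ca Cb; have [a' [b' [_ _ ya yb ->]]] := width_dir_attained y (ex_intro _ a Ca) cC.
by rewrite dotBr lerB ?ya ?yb.
Qed.

Lemma width_dir_ge0 C y : C !=set0 -> compact C -> 0 <= width_dir C y.
Proof. by move=> [a Ca] cC; have := width_dir_ge y cC Ca Ca; rewrite subrr dotC dot0l. Qed.

Lemma width_dir_ge_chord C x0 v y : compact C -> C (x0 + v) -> C (x0 - v) ->
  2 * `|dot y v| <= width_dir C y.
Proof.
move=> cC Cp Cm; have := width_dir_ge y cC Cp Cm; have := width_dir_ge y cC Cm Cp.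
by rewrite !dotBr !dotDr; case: (leP 0 (dot y v)) => [/ger0_norm | /ltr0_norm] ->; lra.
Qed.

Lemma le_width_dir A B y : A !=set0 -> compact B -> A `<=` B ->
  width_dir A y <= width_dir B y.
Proof.
move=> [a Aa] cB AB; apply: ge_sup; first by exists (dot y (a - a)); exists a => //; exists a.
by move=> _ [a' Aa' [b' Ab' <-]]; exact: width_dir_ge cB (AB _ Aa') (AB _ Ab').
Qed.

Lemma width_dir_eq_sub A B y a b : A `<=` B -> A a -> A b ->
    (forall x, B x -> dot y x <= dot y a) -> (forall x, B x -> dot y b <= dot y x) ->
  width_dir A y = width_dir B y.
Proof.
move=> AB Aa Ab ya yb; rewrite (width_dirE (AB _ Aa) (AB _ Ab) ya yb).
by apply: width_dirE => // x /AB; [exact: ya | exact: yb].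
Qed.

Lemma width_dirN C y : C !=set0 -> compact C -> width_dir C (- y) = width_dir C y.
Proof.
move=> C0 cC; have [a [b [Ca Cb ya yb ->]]] := width_dir_attained y C0 cC.
rewrite (width_dirE (y := - y) Cb Ca) ?dotNl; first by rewrite opprK addrC.
- by move=> x /yb; rewrite !dotNl lerN2.
- by move=> x /ya; rewrite !dotNl lerN2.
Qed.

Lemma compact_argmax_dot_neq C y p : C !=set0 -> compact C ->
    (exists2 x, C x & x != p /\ dot y p <= dot y x) ->
  exists a, [/\ C a, a != p & forall x, C x -> dot y x <= dot y a].
Proof.
move=> C0 cC [x Cx [xp px]]; have [a Ca ya] := compact_argmax C0 cC (continuous_dotr y).
have [ap | ] := eqVneq a p; last by exists a.
by exists x; split => // z /ya; rewrite ap => /le_trans; apply.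
Qed.

End Width.

Section LatticeWidth.
Variables (R : realType) (d : nat).
Notation V := 'rV[R]_d.
Implicit Types (y : V) (A B C L : set V).

Lemma dual_latticeN L y : dual_lattice L y -> dual_lattice L (- y).
Proof. by move=> Ly x /Ly[z yz]; exists (- z); rewrite dotNr yz mulrNz. Qed.

Lemma width_directionN L C y : C !=set0 -> compact C ->
  width_direction L C y -> width_direction L C (- y).
Proof.
move=> C0 cC [Ly y0 wy]; split; first exact: dual_latticeN.
  by rewrite oppr_eq0.
by rewrite width_dirN.
Qed.

Lemma lattice_width_le L C y : C !=set0 -> compact C -> dual_lattice L y -> y != 0 ->
  lattice_width L C <= width_dir C y.
Proof.
move=> C0 cC Ly y0; apply: ge_inf; last by exists y.
by exists 0 => _ [y' _ <-]; exact: width_dir_ge0.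
Qed.

Lemma lattice_width_eq_sub L A B : A !=set0 -> compact A -> compact B -> A `<=` B ->
    (forall y, dual_lattice L y -> y != 0 -> lattice_width L B <= width_dir A y) ->
  lattice_width L A = lattice_width L B.
Proof.
move=> A0 cA cB AB lwB.
have [[y [Ly y0]] | noY] := pselect (exists y, dual_lattice L y /\ y != 0); last first.
  suff noW D : [set width_dir D y | y in [set y | dual_lattice L y /\ y != 0]] = set0.
    by rewrite /lattice_width !noW.
  by apply/seteqP; split => // r [y Yy _]; apply: noY; exists y.
apply/eqP; rewrite eq_le; apply/andP; split; apply: lb_le_inf.
- by exists (width_dir B y), y.
- move=> _ [y' [Ly' y'0] <-]; apply: le_trans (lattice_width_le A0 cA Ly' y'0) _.
  exact: le_width_dir.
- by exists (width_dir A y), y.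
- by move=> _ [y' [Ly' y'0] <-]; exact: lwB.
Qed.

End LatticeWidth.

Section Halfspace.
Variables (R : realType) (d : nat).
Notation V := 'rV[R]_d.
Implicit Types (x y u w : V) (C : set V).

Definition halfspace u (a : R) : set V := [set x | dot u x <= a].

Lemma closed_halfspace u a : closed (halfspace u a).
Proof.
rewrite (_ : halfspace u a = dot u @^-1` [set r | r <= a]) //.
by apply: preimage_closed; [move=> x _; exact: continuous_dotr | exact: closed_le].
Qed.

Lemma compact_cut C u a : compact C -> compact (C `&` halfspace u a).
Proof. by move=> cC; exact: compact_closedI cC (@closed_halfspace u a). Qed.

Lemma convex_body_cut C u a x0 : convex_body C -> interior C x0 -> dot u x0 < a ->
  convex_body (C `&` halfspace u a).
Proof.
move=> [cvC cC _] x0C ux0; split; last 1 first.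
- exists x0; rewrite interiorI; split => //.
  have : \forall x \near x0, dot u x < a := continuous_dotr u x0 _ (lt_nbhsl ux0).
  by apply: filterS => x /ltW.
- move=> x y t [Cx ux] [Cy uy] t01; split; first exact: (cvC _ _ _ Cx Cy t01).
  by move: t01 ux uy; rewrite /halfspace /= dotDr !dotZr => /andP[t0 t1]; nra.
- exact: compact_cut.
Qed.

Lemma interior_sphere C x0 : interior C x0 -> exists2 r : R, 0 < r &
  forall w, w != 0 -> C (x0 + (r / `|w|) *: w) /\ C (x0 - (r / `|w|) *: w).
Proof.
move=> /nbhs_ballP[r /= r0 ballC]; exists (r / 2) => [|w w0]; first by rewrite divr_gt0.
have rw : `|(r / 2 / `|w|) *: w| < r.
  by rewrite normrZ gtr0_norm ?divr_gt0 ?normr_gt0 // divfK ?normr_eq0 //; lra.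
by split; apply: ballC; rewrite -ball_normE /ball_ /= opprD addrA subrr add0r ?opprK ?normrN.
Qed.

Lemma interior_dot_lt C u a x0 : interior C x0 -> u != 0 ->
  (forall x, C x -> dot u x <= a) -> dot u x0 < a.
Proof.
move=> /interior_sphere[r r0 sphereC] u0 Ca.
have := Ca _ (sphereC u u0).1; rewrite dotDr dotZr.
have : 0 < r / `|u| * dot u u by rewrite !mulr_gt0 ?invr_gt0 ?normr_gt0 ?dotxx_gt0.
lra.
Qed.

(* [Defs.convex_set]: unqualified, [convex_set] is MathComp-Analysis's notion. *)
Lemma width_dir_cut_ge C u c x0 y (t : R) : Defs.convex_set C -> compact C -> C x0 ->
    (forall x, C x -> dot u x <= c) -> 0 <= t <= 1 ->
  (1 - t) * width_dir C y <= width_dir (C `&` halfspace u (c - t * (c - dot u x0))) y.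
Proof.
move=> cvC cC Cx0 Cc t01.
pose h x := t *: x0 + (1 - t) *: x.
have hC x : C x -> (C `&` halfspace u (c - t * (c - dot u x0))) (h x).
  move=> Cx; split; first exact: (cvC _ _ _ Cx0 Cx t01).
  by have := Cc x Cx; move: t01; rewrite /halfspace /h /= dotDr !dotZr => /andP[t0 t1]; nra.
have [a [b [Ca Cb _ _ ->]]] := width_dir_attained y (ex_intro _ x0 Cx0) cC.
have := width_dir_ge y (compact_cut cC) (hC a Ca) (hC b Cb).
by rewrite /h dotBr !dotDr !dotZr; lra.
Qed.

End Halfspace.

Section ExposedPoints.
Variables (R : realType) (d : nat).
Notation V := 'rV[R]_d.
Implicit Types (x z p q u : V) (C : set V).

Lemma exposed_point_mem C p : exposed_point C p -> C p.
Proof. by move=> [u [c [_ E]]]; have : [set p] p by []; rewrite -E => -[]. Qed.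

Lemma exposed_point_strict C p : exposed_point C p ->
  exists2 u, u != 0 & C p /\ forall x, C x -> x != p -> dot u x < dot u p.
Proof.
move=> ex; have Cp := exposed_point_mem ex; move: ex => [u [c [[u0 Cc _] E]]].
have up : dot u p = c by have : [set p] p by []; rewrite -E => -[].
exists u => //; split => // x Cx; apply: contraNT; rewrite -leNgt up => cux.
by apply/eqP; suff : [set p] x by []; rewrite -E; split => //=; apply/eqP; rewrite eq_le Cc.
Qed.

Lemma farthest_point_exposed C z p : C p -> p != z ->
  (forall x, C x -> dot (x - z) (x - z) <= dot (p - z) (p - z)) -> exposed_point C p.
Proof.
move=> Cp pz far; exists (p - z), (dot (p - z) p).
have near_p x : C x -> dot (x - p) (x - p) + 2 * (dot (p - z) x - dot (p - z) p) <= 0.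
  move=> Cx; have := far x Cx.
  have -> : x - z = (x - p) + (p - z) by rewrite addrA subrK.
  by rewrite dotDD (dotC (x - p) (p - z)) [dot (p - z) (x - p)]dotBr; lra.
split; first split.
- by rewrite subr_eq0.
- by move=> x /near_p; have := dotxx_ge0 (x - p); lra.
- by exists p.
apply/seteqP; split => x /=; last by move=> ->.
move=> [Cx /= xp]; have := near_p x Cx; rewrite xp subrr mulr0 addr0 => xp0.
by apply/eqP; rewrite -subr_eq0 -dotxx_eq0 eq_le xp0 dotxx_ge0.
Qed.

Lemma nearest_point_obtuse C q p : Defs.convex_set C -> C p ->
    (forall x, C x -> dot (p - q) (p - q) <= dot (x - q) (x - q)) ->
  forall x, C x -> dot (q - p) (x - p) <= 0.
Proof.
move=> cvC Cp nearest x Cx.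
set A := dot (p - q) (x - p); set B := dot (x - p) (x - p).
have segment t : 0 < t <= 1 -> 0 <= t * B + 2 * A.
  case/andP=> t0 t1; have t01 : 0 <= t <= 1 by rewrite ltW.
  have := nearest _ (cvC _ _ _ Cx Cp t01).
  rewrite (_ : t *: x + (1 - t) *: p - q = t *: (x - p) + (p - q)); last first.
    by apply/rowP => i; rewrite !mxE; ring.
  rewrite [X in _ <= X]dotDD !dotZl !dotZr (dotC (x - p) (p - q)) -/A -/B => h.
  by rewrite -(pmulr_rge0 _ t0); nra.
rewrite -opprB dotNl oppr_le0 -/A leNgt; apply/negP => A_lt0.
have [BA | AB] := leP B (- A); first by have := segment 1; lra.
have B0 : 0 < B by lra.
have := segment (- A / B); rewrite divfK ?gt_eqF // divr_gt0 ?ler_pdivrMr //; lra.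
Qed.

Lemma separate_point_convex C q : Defs.convex_set C -> compact C -> C !=set0 -> ~ C q ->
  exists u m, [/\ u != 0, forall x, C x -> dot u x <= m & m < dot u q].
Proof.
move=> cvC cC C0 Cq.
have [p Cp nearest] := compact_argmin C0 cC (continuous_dist2 q).
have qp : q - p != 0 by rewrite subr_eq0; apply: contraPneq Cq => ->.
exists (q - p), (dot (q - p) p); split => //.
  by move=> x /(nearest_point_obtuse cvC Cp nearest); rewrite dotBr subr_le0.
by rewrite -subr_gt0 -dotBr dotxx_gt0.
Qed.

Lemma exists_exposed_point_gt C q u m : compact C -> C q -> u != 0 -> m < dot u q ->
  exists2 p, exposed_point C p & m < dot u p.
Proof.
move=> cC Cq u0 mq; have C0 : C !=set0 by exists q.
have [r Cr far_r] := compact_argmax C0 cC (continuous_dist2 q).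
set D := dot (r - q) (r - q); have D_ge0 : 0 <= D := dotxx_ge0 _.
(* [t] is chosen so that [dot u p <= m] would force [|p - q|^2 > D] below. *)
set t := (D + 1) / (2 * (dot u q - m)).
have t_gt0 : 0 < t by rewrite divr_gt0 ?mulr_gt0 ?subr_gt0 //; lra.
have tE : t * (2 * (dot u q - m)) = D + 1 by rewrite divfK // mulf_neq0 // subr_eq0 gt_eqF.
set z := q - t *: u.
have [p Cp far_p] := compact_argmax C0 cC (continuous_dist2 z).
have dist2_z x : dot (x - z) (x - z) =
    dot (x - q) (x - q) + 2 * t * (dot u x - dot u q) + t * t * dot u u.
  rewrite (_ : x - z = (x - q) + t *: u); last by rewrite /z opprB addrA addrAC.
  by rewrite dotDD !dotZr dotZl (dotC (x - q) u) [dot u (x - q)]dotBr; ring.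
have uu_gt0 : 0 < dot u u by rewrite dotxx_gt0.
have far_pos : 0 < dot (p - z) (p - z).
  apply: lt_le_trans (far_p q Cq).
  by rewrite dist2_z !subrr dot0l; have := mulr_gt0 (mulr_gt0 t_gt0 t_gt0) uu_gt0; lra.
exists p.
  apply: farthest_point_exposed Cp _ far_p.
  by apply: contraTneq far_pos => ->; rewrite subrr dot0l ltxx.
have := far_p q Cq; rewrite !dist2_z !subrr dot0l => pq.
rewrite ltNge; apply/negP => pm.
have : t * (dot u q - m) <= t * (dot u q - dot u p) by rewrite ler_pM2l // lerB.
have := far_r p Cp; rewrite -/D; lra.
Qed.

Lemma exists_exposed_point_notin C C' : compact C -> Defs.convex_set C' -> compact C' ->
  C' !=set0 -> C' `<` C -> exists2 p, exposed_point C p & ~ C' p.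
Proof.
move=> cC cvC' cC' C'0 [_ /nonsubset[q [Cq C'q]]].
have [u [m [u0 C'm mq]]] := separate_point_convex cvC' cC' C'0 C'q.
have [p exp mp] := exists_exposed_point_gt cC Cq u0 mq.
by exists p => // /C'm; lra.
Qed.

End ExposedPoints.

Definition exposing_width_direction (R : realType) (d : nat) (L C : set 'rV[R]_d) p :=
  exists y, width_direction L C y /\ forall x, C x -> x != p -> dot y x < dot y p.

Lemma lattice_reduced_of_exposing (R : realType) (d : nat) (L C : set 'rV[R]_d) :
    convex_body C -> (forall p, exposed_point C p -> exposing_width_direction L C p) ->
  lattice_reduced L C.
Proof.
move=> [_ cC _] exposing C' [cvC' cC' [x' /nbhs_singleton C'x']] C'C lw_eq.
have C'0 : C' !=set0 by exists x'.
have [p exp C'p] := exists_exposed_point_notin cC cvC' cC' C'0 C'C.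
have [y [[Ly y0 wy] y_max_p]] := exposing p exp.
have [a [b [C'a C'b _ _ wC']]] := width_dir_attained y C'0 cC'.
have ap : dot y a < dot y p.
  by apply: y_max_p; [exact: C'C.1 | apply: contraPneq C'p => <-].
have := width_dir_ge y cC (exposed_point_mem exp) (C'C.1 _ C'b).
have := lattice_width_le C'0 cC' Ly y0.
by rewrite lw_eq -wy wC' dotBr; lra.
Qed.

Section FiniteDirections.
Variables (R : realType) (d : nat).
Notation V := 'rV[R]_d.
Implicit Types (y w : V) (C L : set V).

Lemma lattice_separating_seq L : is_lattice L -> exists ws : seq V,
  (forall w, w \in ws -> L w) /\
  (forall y1 y2, (forall w, w \in ws -> dot w y1 = dot w y2) -> y1 = y2).
Proof.
move=> [_ _ _ spanL].
suff [ws [Lws ws_sep]] : exists ws : seq V, (forall w, w \in ws -> L w) /\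
    forall j, j \in enum 'I_d -> forall y1 y2,
      (forall w, w \in ws -> dot w y1 = dot w y2) -> y1 0 j = y2 0 j.
  by exists ws; split => // y1 y2 y12; apply/rowP => j; apply: ws_sep; rewrite ?mem_enum.
elim: (enum 'I_d) => [|j s [ws [Lws ws_sep]]]; first by exists [::].
have [n [c [w [Lw ej]]]] := spanL (delta_mx 0 j).
exists ([seq w i | i <- enum 'I_n] ++ ws); split.
  by move=> v; rewrite mem_cat => /orP[/mapP[i _ ->] | /Lws].
move=> j'; rewrite inE => /predU1P[-> | j's] y1 y2 y12.
  rewrite -!dot_delta_mx ej !dot_suml; apply: eq_bigr => i _; rewrite !dotZl y12 //.
  by rewrite mem_cat map_f ?mem_enum.
by apply: ws_sep => // v vws; apply: y12; rewrite mem_cat vws orbT.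
Qed.

Lemma width_dir_le_dot_bounded C (M : R) (ws : seq V) : convex_body C ->
  exists N : nat, forall y, width_dir C y <= M -> forall w, w \in ws -> `|dot w y| < N%:R.
Proof.
move=> [_ cC [x0 x0C]]; have [r r0 sphereC] := interior_sphere x0C.
have C0 : C !=set0 by exists x0; exact: nbhs_singleton.
set B := \big[Num.max/0]_(w <- ws) `|w|.
have B0 : 0 <= B by exact: bigmax_ge_id.
exists (Num.bound (B * `|M| / (2 * r))) => y yM w wws.
apply: le_lt_trans (archi_boundP _); last first.
  by apply: divr_ge0; [exact: mulr_ge0 | rewrite ltW ?mulr_gt0].
rewrite ler_pdivlMr ?mulr_gt0 //.
have wB : `|w| <= B by exact: le_bigmax_seq.
have MM := ler_norm M; have W0 := width_dir_ge0 y C0 cC.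
have [-> | w0] := eqVneq w 0; first by rewrite dot0l normr0 mul0r mulr_ge0 ?normr_ge0.
have := width_dir_ge_chord y cC (sphereC w w0).1 (sphereC w w0).2.
rewrite dotZr normrM gtr0_norm ?divr_gt0 ?normr_gt0 // (dotC y w) => chord.
have rw : r / `|w| * `|w| = r by rewrite divfK ?normr_eq0.
rewrite (_ : _ * (2 * r) = 2 * (r / `|w| * `|dot w y|) * `|w|); last first.
  by rewrite -[in LHS]rw; ring.
apply: le_trans (ler_wpM2r (normr_ge0 w) chord) _.
by rewrite [B * _]mulrC; exact: ler_pM W0 (normr_ge0 _) (le_trans yM MM) wB.
Qed.

Lemma dual_lattice_width_le_finite L C (M : R) : is_lattice L -> convex_body C ->
  finite_set [set y | dual_lattice L y /\ width_dir C y <= M].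
Proof.
move=> latL cbC; set S := [set y | _ /\ _].
have [ws [Lws ws_sep]] := lattice_separating_seq latL.
have [N dotN] := width_dir_le_dot_bounded M ws cbC.
have dot_floor y w : S y -> w \in ws -> dot w y = (Num.floor (dot w y))%:~R.
  by move=> [Ly _] /Lws /Ly[z ->]; rewrite intrKfloor.
have floor_lt y w : S y -> w \in ws -> (`|Num.floor (dot w y)| < N)%N.
  move=> Sy wws; rewrite -(ltr_nat R) natr_absz intr_norm -dot_floor //.
  exact: dotN Sy.2 w wws.
pose code y : {ffun 'I_(size ws) -> 'I_(N.*2).+1} :=
  [ffun k : 'I_(size ws) => inord `|Num.floor (dot ws`_k y) + N|].
have code_inj : {in S &, injective code}.
  move=> y1 y2 /set_mem Sy1 /set_mem Sy2 /ffunP c12.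
  apply: ws_sep => _ /(nthP 0)[k kws <-]; have wk := mem_nth 0 kws.
  rewrite [LHS](dot_floor _ _ Sy1 wk) [RHS](dot_floor _ _ Sy2 wk); congr intmul.
  move: (c12 (Ordinal kws)); rewrite !ffunE.
  exact: inord_shift_inj (floor_lt _ _ Sy1 wk) (floor_lt _ _ Sy2 wk).
by rewrite -(eq_finite_set (inj_card_eq code_inj)); exact: finite_finset.
Qed.

End FiniteDirections.

Section CutNearExposedPoint.
Variables (R : realType) (d : nat).
Notation V := 'rV[R]_d.
Implicit Types (x y : V).
Variables (L C : set V) (u p x0 : V).
Hypotheses (latL : is_lattice L) (cbC : convex_body C) (x0C : interior C x0)
  (u0 : u != 0) (u_exposes_p : forall x, C x -> x != p -> dot u x < dot u p)
  (not_exposing : forall y, width_direction L C y ->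
     exists2 x, C x & x != p /\ dot y p <= dot y x).

Local Notation gap := (dot u p - dot u x0).
Local Notation cut t := (C `&` halfspace u (dot u p - t * gap)).

Let cC : compact C. Proof. by case: cbC. Qed.
Let C0 : C !=set0. Proof. by exists x0; exact: nbhs_singleton. Qed.

Let u_le_p x : C x -> dot u x <= dot u p.
Proof. by move=> Cx; have [-> | /(u_exposes_p Cx)/ltW] := eqVneq x p. Qed.

Let gap_gt0 : 0 < gap.
Proof. by rewrite subr_gt0; exact: interior_dot_lt x0C u0 u_le_p. Qed.

Lemma width_dir_cut_near y : width_direction L C y ->
  \forall t \near 0^'+, width_dir (cut t) y = width_dir C y.
Proof.
move=> wy.
have [a [Ca ap ya]] := compact_argmax_dot_neq C0 cC (not_exposing wy).
have [b [Cb bp yb]] :=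
  compact_argmax_dot_neq C0 cC (not_exposing (width_directionN C0 cC wy)).
have in_cut z : C z -> z != p -> \forall t \near 0^'+, (cut t) z.
  move=> Cz zp; near=> t; split => //; rewrite /halfspace /=.
  suff : t * gap <= dot u p - dot u z by lra.
  rewrite -ler_pdivlMr //.
  by near: t; apply: nbhs_right_le; rewrite divr_gt0 // subr_gt0 u_exposes_p.
near=> t; apply: (width_dir_eq_sub (a := a) (b := b) _ _ _ ya).
- by move=> x [].
- by near: t; exact: in_cut Ca ap.
- by near: t; exact: in_cut Cb bp.
- by move=> x /yb; rewrite !dotNl lerN2.
Unshelve. all: by end_near.
Qed.

Lemma lattice_width_le_width_dir_cut_near y : dual_lattice L y -> y != 0 ->
  \forall t \near 0^'+, lattice_width L C <= width_dir (cut t) y.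
Proof.
move=> Ly y0; set w := lattice_width L C; set W := width_dir C y.
have [cvC _ _] := cbC; have Cx0 : C x0 := nbhs_singleton x0C.
have /predU1P[wW | wW] : (w == W) || (w < W) by rewrite -le_eqVlt; exact: lattice_width_le.
  have wy : width_direction L C y by split.
  by apply: filterS (width_dir_cut_near wy) => t ->; rewrite wW.
have w0 : 0 <= w.
  by apply: lb_le_inf => [|_ [y' _ <-]]; [exists W, y | exact: width_dir_ge0].
near=> t.
have t0 : 0 < t by near: t; exact: nbhs_right_gt.
have t1 : t <= 1 by near: t; apply: nbhs_right_le.
have tW : t * W <= W - w.
  rewrite -ler_pdivlMr; last by lra.
  by near: t; apply: nbhs_right_le; rewrite divr_gt0 //; lra.
have t01 : 0 <= t <= 1 by rewrite ltW.
by have := width_dir_cut_ge y cvC cC Cx0 u_le_p t01; rewrite -/W; lra.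
Unshelve. all: by end_near.
Qed.

Lemma lattice_width_cut_near :
  \forall t \near 0^'+, lattice_width L (cut t) = lattice_width L C.
Proof.
set w := lattice_width L C; have [cvC _ _] := cbC; have Cx0 : C x0 := nbhs_singleton x0C.
set S := [set y | dual_lattice L y /\ width_dir C y <= 2 * w] `&` [set y | y != 0].
have finS : finite_set S := finite_setIl _ (dual_lattice_width_le_finite (2 * w) latL cbC).
have nearS := filter_forall_finite_set _ finS
  (fun y Sy => lattice_width_le_width_dir_cut_near Sy.1.1 Sy.2).
near=> t.
have t0 : 0 < t by near: t; exact: nbhs_right_gt.
have t_half : t <= 1 / 2 by near: t; apply: nbhs_right_le.
have cut_S : forall y, S y -> w <= width_dir (cut t) y by near: t; exact: nearS.
have t01 : 0 <= t <= 1 by rewrite ltW //=; lra.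
apply: lattice_width_eq_sub (compact_cut cC) cC _ _ => [| x [] // | y Ly y0].
  by exists x0; split => //; rewrite /halfspace /=; have := gap_gt0; nra.
have [W2w | W2w] := leP (width_dir C y) (2 * w); first exact: cut_S.
apply: le_trans (width_dir_cut_ge y cvC cC Cx0 u_le_p t01).
by have := width_dir_ge0 y C0 cC; nra.
Unshelve. all: by end_near.
Qed.

Lemma cut_preserving_lattice_width : exists t,
  [/\ convex_body (cut t), ~ (cut t) p & lattice_width L (cut t) = lattice_width L C].
Proof.
have : \forall t \near 0^'+, [/\ 0 < t, t < 1 & lattice_width L (cut t) = lattice_width L C].
  near=> t; split; first by near: t; exact: nbhs_right_gt.
    by near: t; apply: nbhs_right_lt.
  by near: t; exact: lattice_width_cut_near.
move=> /filter_ex[t [t0 t1 lw]]; exists t; split => //.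
  by apply: convex_body_cut cbC x0C _; have := gap_gt0; nra.
by move=> [_]; rewrite /halfspace /=; have := gap_gt0; nra.
Unshelve. all: by end_near.
Qed.

End CutNearExposedPoint.

Lemma exposing_width_direction_of_reduced (R : realType) (d : nat) (L C : set 'rV[R]_d) p :
    is_lattice L -> convex_body C -> lattice_reduced L C -> exposed_point C p ->
  exposing_width_direction L C p.
Proof.
move=> latL cbC reduced /exposed_point_strict[u u0 [Cp u_exposes_p]].
have [_ _ [x0 x0C]] := cbC.
apply: contrapT => no_y.
have not_exposing y : width_direction L C y -> exists2 x, C x & x != p /\ dot y p <= dot y x.
  move=> wy; apply: contrapT => no_x; apply: no_y; exists y; split => // x Cx xp.
  by rewrite ltNge; apply/negP => yx; apply: no_x; exists x.
have [t [cb_cut p_cut lw_cut]] :=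
  cut_preserving_lattice_width latL cbC x0C u0 u_exposes_p not_exposing.
by apply: (reduced _ cb_cut) lw_cut; split => [x [] // | /(_ p Cp)].
Qed.

Theorem proposition3p1 (R : realType) (d : nat) (C L : set 'rV[R]_d) :
  convex_body C -> is_lattice L ->
  (lattice_reduced L C <->
   (forall p, exposed_point C p ->
      exists y, width_direction L C y /\
        (forall x, C x -> x != p -> dot y x < dot y p))).
Proof.
move=> cbC latL; split; last exact: lattice_reduced_of_exposing.
by move=> reduced p; exact: exposing_width_direction_of_reduced.
Qed.
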